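(* Let $R\subseteq S$ be as in the context, let $n=n_1+\cdots+n_\ell$ with $n_i$ positive integers, and let $\mathcal{C}\subseteq S^n$ be any code (linear or not) with at least two elements. Setting $k=\log_{|S|}|\mathcal{C}|$, we have ${\rm d}_{SR}(\mathcal{C})\le n-k+1$, where ${\rm d}_{SR}$ is the sum-rank distance over $R$ for the length partition $n=n_1+\cdots+n_\ell$.
   Context: $R$ is a finite commutative chain ring with maximal ideal $\mathfrak{m}$; $S=R[x]/(h)$ with $h\in R[x]$ monic of degree $m$ irreducible modulo $\mathfrak{m}$, a free $R$-module of rank $m$. Rank: for $\mathbf{u}\in S^s$, fix an $R$-basis $\alpha_1,\ldots,\alpha_m$ of $S$ and write $\mathbf{u}=\sum_{i=1}^m\alpha_i(c_{i,1},\ldots,c_{i,s})$ with $c_{i,j}\in R$; ${\rm rk}(\mathbf{u})$ is the number of nonzero diagonal entries in the Smith normal form of $(c_{i,j})\in R^{m\times s}$ (independent of the basis). For $\mathbf{c}=(\mathbf{c}^{(1)},\ldots,\mathbf{c}^{(\ell)})\in S^n$ with $\mathbf{c}^{(i)}\in S^{n_i}$, ${\rm wt}_{SR}(\mathbf{c})=\sum_i{\rm rk}(\mathbf{c}^{(i)})$; ${\rm d}_{SR}(\mathbf{c},\mathbf{d})={\rm wt}_{SR}(\mathbf{c}-\mathbf{d})$; ${\rm d}_{SR}(\mathcal{C})$ is the minimum of ${\rm d}_{SR}(\mathbf{c},\mathbf{d})$ over distinct $\mathbf{c},\mathbf{d}\in\mathcal{C}$. *)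

From Stdlib Require Import Reals.
From HB Require Import structures.
From mathcomp Require Import all_boot all_order all_algebra.
Set Implicit Arguments. Unset Strict Implicit. Unset Printing Implicit Defensive.
Import GRing.Theory.
Local Open Scope ring_scope.

Section Defs.
Variable R : finComUnitRingType.

Definition is_ideal (I : {set R}) : bool :=
  [&& (0 : R) \in I,
      [forall a in I, forall b in I, a - b \in I] &
      [forall a in I, forall r : R, r * a \in I]].

Definition chain_ring : Prop :=
  forall I J : {set R}, is_ideal I -> is_ideal J -> I \subset J \/ J \subset I.

Definition is_maximal_ideal (M : {set R}) : Prop :=
  [/\ is_ideal M, M != [set: R] &
      forall J : {set R}, is_ideal J -> M \subset J -> J = M \/ J = [set: R]].

(* h is irreducible modulo the ideal M: its image hbar in (R/M)[x] is
   non-constant and any factorisation hbar = fbar * gbar has fbar or gbar constant.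
   Written on representatives: "fbar constant" <-> all coefficients of index >= 1 lie in M,
   and "hbar = fbar gbar" <-> all coefficients of h - f g lie in M. *)
Definition red_const (M : {set R}) (f : {poly R}) : Prop :=
  forall i : nat, (0 < i)%N -> f`_i \in M.

Definition irreducible_mod (M : {set R}) (h : {poly R}) : Prop :=
  ~ red_const M h /\
  forall f g : {poly R}, (forall i : nat, (h - f * g)`_i \in M) ->
     red_const M f \/ red_const M g.

Definition dvdR (a b : R) : bool := [exists c : R, b == a * c].

Definition diag_rect (a b : nat) (d : {ffun 'I_(minn a b) -> R}) : 'M[R]_(a, b) :=
  \matrix_(i < a, j < b) \sum_(k < minn a b | (i == k :> nat) && (j == k :> nat)) d k.

Definition snf_rankb (a b : nat) (M : 'M[R]_(a, b)) (r : nat) : bool :=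
  [exists P : 'M[R]_a, exists Q : 'M[R]_b, exists d : {ffun 'I_(minn a b) -> R},
    [&& P \in unitmx, Q \in unitmx, M == P *m diag_rect d *m Q,
        [forall k : 'I_(minn a b), forall k' : 'I_(minn a b),
            ((k <= k')%N ==> dvdR (d k) (d k'))] &
        r == #|[set k | d k != 0]| ]].

Definition rk_mx (a b : nat) (M : 'M[R]_(a, b)) : nat :=
  if [pick r : 'I_(minn a b).+1 | snf_rankb M r] is Some r then val r else 0%N.

Variable h : {poly R}.
(* S = R[x]/(h); for h monic of degree m >= 1, elements of {poly %/ h} are the
   polynomials of size <= m, i.e. coordinates w.r.t. the R-basis 1, x, ..., x^(m-1) *)
Notation S := {poly %/ h}.
Notation m := (size (mk_monic h)).-1.

Definition coord_mx (s : nat) (u : 'rV[S]_s) : 'M[R]_(m, s) :=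
  \matrix_(i < m, j < s) ((u 0 j : {poly R})`_i).

Definition rkS (s : nat) (u : 'rV[S]_s) : nat := rk_mx (coord_mx u).

Variables (l : nat) (ns : 'I_l -> nat).
Notation n := (\sum_(i < l) ns i)%N.

(* sum-rank weight for the partition n = n_1 + ... + n_l (blocks = consecutive coordinates) *)
Definition wtSR (c : 'rV[S]_n) : nat := (\sum_(i < l) rkS (submxrow c i))%N.

Definition dSR (c d : 'rV[S]_n) : nat := wtSR (c - d).

(* minimum sum-rank distance of a code (every weight is <= n, so the default n
   of the iterated minimum is harmless when C has two distinct elements) *)
Definition dSR_code (C : {set 'rV[S]_n}) : nat :=
  (\big[minn/n]_(c in C) \big[minn/n]_(d in C | d != c) dSR c d)%N.

End Defs.

(* Over a chain ring the principal ideals are totally ordered, so every finite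
   family of elements has a member dividing all the others.  Using such an
   entry as a pivot, Gaussian elimination shows that d * I_k can only factor
   through fewer than k coordinates when d = 0; applied to the Smith normal
   form, the rank of a matrix is at most its number of nonzero columns.
   Hence the sum-rank weight is bounded by the Hamming weight, and the
   classical Singleton argument (puncturing the last d - 1 coordinates is
   injective on the code) gives |C| <= |S|^(n - d + 1). *)

From Stdlib Require Import Reals Lra.
From HB Require Import structures.
From mathcomp Require Import all_boot all_order all_algebra zify.
Set Implicit Arguments. Unset Strict Implicit. Unset Printing Implicit Defensive.
Import GRing.Theory.

Section Elimination.
Local Open Scope ring_scope.

Lemma pivot_elimination (R : comPzRingType) (I T : finType) (II : {set I})
    (TT : {set T}) (A : I -> T -> R) (B : T -> I -> R) (d : R) (t0 : T) (k0 : I) :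
  t0 \in TT -> k0 \in II -> B t0 k0 = 1 ->
  {in II &, forall i k, \sum_(t in TT) A i t * B t k = d * (i == k)%:R} ->
  {in II :\ k0 &, forall i k,
     \sum_(t in TT :\ t0) A i t * (B t k - B t k0 * B t0 k) = d * (i == k)%:R}.
Proof.
move=> TTt0 IIk0 B00 AB i k /setD1P [ik0 IIi] /setD1P [_ IIk].
have := AB i k IIi IIk; have := AB i k0 IIi IIk0.
rewrite !(big_setD1 t0 TTt0) /= B00 mulr1 (negbTE ik0) mulr0 => ABik0 <-.
rewrite (eq_bigr (fun t => A i t * B t k - A i t * B t k0 * B t0 k)); last first.
  by move=> t _; rewrite mulrBr mulrA.
rewrite sumrB -big_distrl /=.
have -> : \sum_(t in TT :\ t0) A i t * B t k0 = - A i t0.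
  by apply/eqP; rewrite -addr_eq0 addrC ABik0.
by rewrite mulNr opprK addrC.
Qed.

Lemma mulmx_col_support (R : pzSemiRingType) m n p (N : 'M[R]_(m, n))
    (Q : 'M[R]_(n, p)) (J : {set 'I_n}) :
  (forall i t, t \notin J -> N i t = 0) ->
  forall i k, (N *m Q) i k = \sum_(t in J) N i t * Q t k.
Proof.
move=> NJ i k; rewrite mxE (bigID (mem J)) /= [X in _ + X]big1 ?addr0 //.
by move=> t /NJ ->; rewrite mul0r.
Qed.

End Elimination.

Section ChainRing.
Local Open Scope ring_scope.
Variable R : finComUnitRingType.

Lemma dvdRP (a b : R) : reflect (exists c, b = a * c) (dvdR a b).
Proof. by apply: (iffP existsP) => -[c /eqP]; exists c => //; apply/eqP. Qed.

Lemma dvdRR (a : R) : dvdR a a.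
Proof. by apply/dvdRP; exists 1; rewrite mulr1. Qed.

Lemma dvdR_trans (a b c : R) : dvdR a b -> dvdR b c -> dvdR a c.
Proof.
move=> /dvdRP [x ->] /dvdRP [y ->].
by apply/dvdRP; exists (x * y); rewrite mulrA.
Qed.

Lemma is_ideal_dvdR (a : R) : is_ideal [set b | dvdR a b].
Proof.
apply/and3P; split.
- by rewrite inE; apply/dvdRP; exists 0; rewrite mulr0.
- apply/forall_inP=> _ /[!inE] /dvdRP [u ->].
  apply/forall_inP=> _ /[!inE] /dvdRP [v ->].
  by apply/dvdRP; exists (u - v); rewrite mulrBr.
- apply/forall_inP=> _ /[!inE] /dvdRP [u ->]; apply/forallP=> r.
  by rewrite inE; apply/dvdRP; exists (r * u); rewrite mulrCA.
Qed.

Lemma diag_rect_widen (a b : nat) (d : {ffun 'I_(minn a b) -> R})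
    (i k : 'I_(minn a b)) :
  diag_rect d (widen_ord (geq_minl a b) i) (widen_ord (geq_minr a b) k)
  = d i * (i == k)%:R.
Proof.
rewrite mxE; have [<- | neq_ik] := eqVneq i k.
  by rewrite (big_pred1 i) ?mulr1 // => j /=; rewrite andbb eq_sym.
rewrite big_pred0 ?mulr0 // => j /=; apply/negP => /andP [/eqP ij /eqP kj].
by move/eqP: neq_ik; apply; apply: val_inj; rewrite /= ij kj.
Qed.

Hypothesis chainR : chain_ring R.

Lemma dvdR_total (a b : R) : dvdR a b || dvdR b a.
Proof.
have [/subsetP ab | /subsetP ba] := chainR (is_ideal_dvdR a) (is_ideal_dvdR b).
- by have := ab a; rewrite !inE dvdRR => /(_ isT) ->; rewrite orbT.
- by have := ba b; rewrite !inE dvdRR => /(_ isT) ->.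
Qed.

Lemma exists_dvdR_all (I : finType) (P : {set I}) (F : I -> R) :
  P != set0 -> exists2 i, i \in P & {in P, forall j, dvdR (F i) (F j)}.
Proof.
case/set0Pn=> i0 Pi0.
have [i Pi maxi] :=
  @arg_maxnP _ i0 (mem P) (fun i => #|[set y | dvdR (F i) y]|) Pi0.
exists i => // j Pj; have /orP [//|dvd_ji] := dvdR_total (F i) (F j).
have sub_ij : [set y | dvdR (F i) y] \subset [set y | dvdR (F j) y].
  by apply/subsetP=> y; rewrite !inE; apply: dvdR_trans.
have /eqP eq_ij : [set y | dvdR (F i) y] == [set y | dvdR (F j) y].
  by rewrite eqEcard sub_ij; apply: maxi.
have : F j \in [set y | dvdR (F j) y] by rewrite inE dvdRR.
by rewrite -eq_ij inE.
Qed.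

Lemma narrow_scalar_factorization_eq0 (I T : finType) (II : {set I})
    (TT : {set T}) (A : I -> T -> R) (B : T -> I -> R) (d : R) :
  (#|TT| < #|II|)%N ->
  {in II &, forall i k, \sum_(t in TT) A i t * B t k = d * (i == k)%:R} ->
  d = 0.
Proof.
move eTT: #|TT| => nT; elim: nT TT II A B eTT => [|nT IH] TT II A B eTT ltTI AB.
  have /set0Pn [i IIi] : II != set0 by rewrite -card_gt0.
  have := AB i i IIi IIi; move/eqP: eTT; rewrite cards_eq0 => /eqP ->.
  by rewrite big_set0 eqxx mulr1.
have : setX TT II != set0 by rewrite -card_gt0 cardsX muln_gt0 eTT (ltn_trans _ ltTI).
case/(exists_dvdR_all (fun x => B x.1 x.2)) => -[t0 k0] /setXP [TTt0 IIk0] /= piv.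
have /fin_all_exists [q Bq] :
    forall x : T * I, exists c, x \in setX TT II -> B x.1 x.2 = B t0 k0 * c.
  move=> x; have [TIx | _] := boolP (x \in setX TT II); last by exists 0.
  by have /dvdRP [c ->] := piv x TIx; exists c.
(* The pivot is normalised by hand: B t0 k0 may be a zero divisor, so its
   chosen quotient by itself need not be 1. *)
pose B1 t k := if (t, k) == (t0, k0) then 1 else q (t, k).
have BE t k : t \in TT -> k \in II -> B t k = B t0 k0 * B1 t k.
  move=> TTt IIk; rewrite /B1; case: eqP => [[-> ->] | _]; first by rewrite mulr1.
  by apply: (Bq (t, k)); apply/setXP.
apply: (IH (TT :\ t0) (II :\ k0) (fun i t => A i t * B t0 k0)
           (fun t k => B1 t k - B1 t k0 * B1 t0 k)).
- by move: eTT; rewrite (cardsD1 t0) TTt0 add1n => -[].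
- by move: ltTI; rewrite -eTT (cardsD1 t0 TT) (cardsD1 k0 II) TTt0 IIk0.
- apply: pivot_elimination => //; first by rewrite /B1 eqxx.
  move=> i k IIi IIk; rewrite -(AB i k IIi IIk); apply: eq_bigr => t TTt.
  by rewrite (BE t k) // mulrA.
Qed.

Lemma snf_rankb_le_support (a b : nat) (Mx : 'M[R]_(a, b)) (J : {set 'I_b}) r :
  (forall i j, j \notin J -> Mx i j = 0) -> snf_rankb Mx r -> (r <= #|J|)%N.
Proof.
move=> MxJ /existsP [P /existsP [Q /existsP [d]]].
case/and5P=> Pu Qu /eqP defMx /forallP dvd_d /eqP ->.
set K := [set k | d k != 0]; rewrite leqNgt; apply/negP => ltJK.
have /set0Pn [k1 Kk1] : K != set0 by rewrite -card_gt0 (leq_ltn_trans _ ltJK).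
have [kmax Kkmax maxk] := @arg_maxnP _ k1 (mem K) val Kk1.
have /fin_all_exists [c dc] : forall k, exists c, k \in K -> d kmax = d k * c.
  move=> k; have [Kk | _] := boolP (k \in K); last by exists 0.
  have /dvdRP [c ->] := implyP (forallP (dvd_d k) kmax) (maxk k Kk).
  by exists c.
(* d kmax is divisible by every nonzero d k, so rescaling the columns of
   the K x K block of diag_rect d turns it into d kmax * I, a matrix that
   factors through the columns J of Mx. *)
pose N := invmx P *m Mx.
have NJ i t : t \notin J -> N i t = 0.
  by move=> tJ; rewrite mxE big1 // => l _; rewrite MxJ ?mulr0.
have ND : N *m invmx Q = diag_rect d by rewrite /N defMx mulmxA mulKmx // mulmxK.
suff dkmax0 : d kmax = 0 by move: Kkmax; rewrite /= inE dkmax0 eqxx.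
apply: (@narrow_scalar_factorization_eq0 _ _ K J
          (fun i t => N (widen_ord (geq_minl a b) i) t)
          (fun t k => invmx Q t (widen_ord (geq_minr a b) k) * c k) _ ltJK).
move=> i k _ Kk; under eq_bigr do rewrite mulrA.
rewrite -big_distrl -mulmx_col_support // ND diag_rect_widen /=.
by have [-> | _] := eqVneq i k; rewrite ?mulr1 -?dc // !mulr0 mul0r.
Qed.

Lemma rk_mx_le_support (a b : nat) (Mx : 'M[R]_(a, b)) (J : {set 'I_b}) :
  (forall i j, j \notin J -> Mx i j = 0) -> (rk_mx Mx <= #|J|)%N.
Proof.
by move=> MxJ; rewrite /rk_mx; case: pickP => // r; apply: snf_rankb_le_support.
Qed.

End ChainRing.

Section Hamming.
Local Open Scope ring_scope.

Definition hamming_wt (V : zmodType) n (u : 'rV[V]_n) : nat :=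
  #|[set j | u 0 j != 0]|.

Lemma hamming_wt_gt0 (V : zmodType) n (u : 'rV[V]_n) :
  u != 0 -> (0 < hamming_wt u)%N.
Proof.
move=> u_neq0; rewrite card_gt0; apply: contraNneq u_neq0 => /setP u0.
by apply/eqP/rowP => j; have := u0 j; rewrite !inE mxE => /negbFE/eqP.
Qed.

Lemma card_code_le_singleton (V : finZmodType) n d (C : {set 'rV[V]_n}) :
  {in C &, forall c c', c != c' -> d <= hamming_wt (c - c')}%N ->
  (#|C| <= #|V| ^ (n - d.-1))%N.
Proof.
move=> Cd; set k := (n - d.-1)%N; have le_kn : (k <= n)%N by apply: leq_subr.
pose kept := [set widen_ord le_kn j | j : 'I_k].
pose punct (c : 'rV[V]_n) := \row_(j < k) c 0 (widen_ord le_kn j).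
suff /card_in_imset <- : {in C &, injective punct}.
  by rewrite (leq_trans (max_card _)) // card_mx mul1n.
move=> c c' Cc Cc' eq_punct; apply/eqP/negPn/negP => neq_cc'.
have wt_le : (hamming_wt (c - c') <= #|~: kept|)%N.
  apply/subset_leq_card/subsetP => j; rewrite !inE mxE.
  apply: contra => /imsetP [i _ ->].
  have := congr1 (fun u : 'rV_k => u 0 i) eq_punct.
  by rewrite !mxE => ->; rewrite subrr.
have card_kept : #|kept| = k.
  by rewrite card_imset ?card_ord // => i i' /(congr1 val) eq_ii'; apply: val_inj.
have wt_gt0 : (0 < hamming_wt (c - c'))%N.
  by apply: hamming_wt_gt0; rewrite subr_eq0.
have d_le_wt : (d <= hamming_wt (c - c'))%N := Cd c c' Cc Cc' neq_cc'.
have := cardsC kept; rewrite card_ord card_kept /k; lia.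
Qed.

End Hamming.

Section SumRank.
Import Order.TTheory.
Local Open Scope ring_scope.
Variables (R : finComUnitRingType) (h : {poly R}).
Hypothesis chainR : chain_ring R.

Lemma rkS_le_hamming_wt s (u : 'rV[{poly %/ h}]_s) : (rkS u <= hamming_wt u)%N.
Proof.
apply: rk_mx_le_support => // i j; rewrite inE negbK mxE => /eqP ->.
exact: coef0.
Qed.

Variables (l : nat) (ns : 'I_l -> nat).

Lemma wtSR_le_hamming_wt (c : 'rV[{poly %/ h}]_(\sum_(i < l) ns i)) :
  (wtSR c <= hamming_wt c)%N.
Proof.
rewrite /wtSR; apply: (@leq_trans (\sum_(i < l) hamming_wt (submxrow c i))).
  by apply: leq_sum => i _; apply: rkS_le_hamming_wt.
rewrite /hamming_wt; under eq_bigr do rewrite -sum1_card.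
rewrite -sum1_card (reindex _ (onW_bij _ (@tagnat.rank_bij l ns))) /= sig_big_dep /=.
by apply: eq_leq; apply: eq_bigl => x; rewrite !inE mxE tagnat.rankE.
Qed.

Lemma dSR_code_le (C : {set 'rV[{poly %/ h}]_(\sum_(i < l) ns i)}) :
  (dSR_code C <= \sum_(i < l) ns i)%N.
Proof. by rewrite /dSR_code -minEnat; apply: (@bigmin_le_id _ nat). Qed.

Lemma dSR_code_le_hamming_wt (C : {set 'rV[{poly %/ h}]_(\sum_(i < l) ns i)}) :
  {in C &, forall c c', c != c' -> dSR_code C <= hamming_wt (c - c')}%N.
Proof.
move=> c c' Cc Cc' neq_cc'; apply: leq_trans (wtSR_le_hamming_wt _).
rewrite /dSR_code -minEnat.
apply: leq_trans (@bigmin_le_cond _ nat _ _ c _ _ Cc) _.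
by apply: (@bigmin_le_cond _ nat _ _ c'); rewrite Cc' eq_sym.
Qed.

End SumRank.

Lemma INR_expn (a k : nat) : INR (a ^ k) = pow (INR a) k.
Proof. by elim: k => [|k IHk]; rewrite ?expn0 // expnS -multE mult_INR IHk. Qed.

Lemma ln_ratio_le_expn (N q K : nat) :
  (0 < N)%N -> (1 < q)%N -> (N <= q ^ K)%N ->
  Rle (Rdiv (ln (INR N)) (ln (INR q))) (INR K).
Proof.
move=> /ltP N_gt0 /ltP q_gt1 /leP le_N_qK.
have /lt_0_INR INR_N_gt0 := N_gt0.
have /lt_1_INR INR_q_gt1 := q_gt1.
have ln_q_gt0 : Rlt 0 (ln (INR q)) by rewrite -ln_1; apply: ln_increasing; lra.
apply: (Rmult_le_reg_r (ln (INR q))) => //.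
rewrite /Rdiv Rmult_assoc Rinv_l ?Rmult_1_r; last lra.
rewrite -ln_pow -?INR_expn; last lra.
have [lt_N_qK | ->] := Rle_lt_or_eq_dec _ _ (le_INR _ _ le_N_qK); last exact: Rle_refl.
exact/Rlt_le/ln_increasing.
Qed.

Theorem proposition1 (R : finComUnitRingType) (M : {set R}) (h : {poly R})
    (l : nat) (ns : 'I_l -> nat) (C : {set 'rV[{poly %/ h}]_(\sum_(i < l) ns i)}) :
  chain_ring R ->
  is_maximal_ideal M ->
  h \is monic ->
  irreducible_mod M h ->
  (forall i : 'I_l, 0 < ns i) ->
  1 < #|C| ->
  Rle (INR (dSR_code C))
      (Rplus (Rminus (INR (\sum_(i < l) ns i))
                     (Rdiv (ln (INR #|C|)) (ln (INR #|{poly %/ h}|))))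
             (INR 1)).
Proof.
(* Neither the residue field nor the shape of h matters: the bound holds
   for any quotient ring R[x]/(h) over a chain ring. *)
move=> chainR _ _ _ _ C_gt1.
have S_gt1 : (1 < #|{poly %/ h}|)%N.
  by apply/card_gt1P; exists 0%R, 1%R; rewrite eq_sym oner_neq0.
have C_le := card_code_le_singleton (dSR_code_le_hamming_wt chainR (C := C)).
have := ln_ratio_le_expn (ltnW C_gt1) S_gt1 C_le.
have /leP/le_INR : (\sum_(i < l) ns i - (dSR_code C).-1 + dSR_code C
                    <= \sum_(i < l) ns i + 1)%N.
  by have := dSR_code_le C; lia.
rewrite !plus_INR; lra.
Qed.
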